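(* Let $a,b,d,f,c\in\mathbb{C}$ with $|af|\neq|bd|$, and let $M=\max\{M_1,M_2\}$ where, with $\Delta=|af|-|bd|$, $K_1=\left(\frac{|b|+|f|}{|\Delta|}\right)^2$, $K_2=\left(\frac{|a|+|d|}{|\Delta|}\right)^2$, $M_1=K_1+\sqrt{K_1(K_1+|c|)}$, $M_2=K_2+\sqrt{K_2(K_2+|c|)}$. Then $M$ is an escape radius for the system: for any orbit $(z_1(n),z_2(n))$ of the system, if $\max\{|z_1(n_0)|,|z_2(n_0)|\}>M$ for some $n_0\ge0$, then $\max\{|z_1(n)|,|z_2(n)|\}\to\infty$ as $n\to\infty$ (indeed $\max\{|z_1(n_0+k)|,|z_2(n_0+k)|\}>2^kM$ for all $k\ge0$).
   Context: The 2D coupled quadratic system with connectivity matrix $A=\begin{pmatrix}a&b\\ d&f\end{pmatrix}$ and parameter $c\in\mathbb{C}$ is the iteration $z_1(n+1)=(az_1(n)+bz_2(n))^2+c$, $z_2(n+1)=(dz_1(n)+fz_2(n))^2+c$, $n\ge 0$, from an initial condition $(z_1(0),z_2(0))\in\mathbb{C}^2$. *)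

From Stdlib Require Import Reals.
From Coquelicot Require Import Coquelicot.
Open Scope R_scope.

Fixpoint orbit (a b d f c z1 z2 : C) (n : nat) : C * C :=
  match n with
  | O => (z1, z2)
  | S m =>
      let p := orbit a b d f c z1 z2 m in
      let u := Cplus (Cmult a (fst p)) (Cmult b (snd p)) in
      let v := Cplus (Cmult d (fst p)) (Cmult f (snd p)) in
      (Cplus (Cmult u u) c, Cplus (Cmult v v) c)
  end.

Definition orbit_norm (a b d f c z1 z2 : C) (n : nat) : R :=
  Rmax (Cmod (fst (orbit a b d f c z1 z2 n))) (Cmod (snd (orbit a b d f c z1 z2 n))).

Definition Delta (a b d f : C) : R := Cmod (Cmult a f) - Cmod (Cmult b d).
Definition K1 (a b d f : C) : R := ((Cmod b + Cmod f) / Rabs (Delta a b d f)) ^ 2.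
Definition K2 (a b d f : C) : R := ((Cmod a + Cmod d) / Rabs (Delta a b d f)) ^ 2.
Definition M1 (a b d f c : C) : R :=
  K1 a b d f + sqrt (K1 a b d f * (K1 a b d f + Cmod c)).
Definition M2 (a b d f c : C) : R :=
  K2 a b d f + sqrt (K2 a b d f * (K2 a b d f + Cmod c)).
Definition escM (a b d f c : C) : R := Rmax (M1 a b d f c) (M2 a b d f c).

From Pilot Require Import Defs.
From Stdlib Require Import Reals Lra Psatz.
From Coquelicot Require Import Coquelicot.
Open Scope R_scope.

(* Write (x, y) for the state at time n, u = a x + b y and
   v = d x + f y, so that the next state is (u^2 + c, v^2 + c), and put
   W = max(|u|, |v|).
   - Inverting the linear map (Cramer's rule, det = af - bd) gives
     |det| |x| <= (|b| + |f|) W and |det| |y| <= (|a| + |d|) W; since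
     |Delta| <= |det|, this yields |x|^2 <= K1 W^2 and |y|^2 <= K2 W^2.
   - The reverse triangle inequality gives that the next state has norm
     at least W^2 - |c|.
   - A real quadratic estimate: if m > K + sqrt(K (K + |c|)) and
     m^2 <= K W^2 then W^2 - |c| > 2 m.  Applied to m = max(|x|, |y|)
     (with K = K1 or K2), it shows that the orbit norm doubles at every step
     as soon as it exceeds the escape radius escM.
   By induction the orbit norm at time n0 + k is at least 2^k times its value
   at n0, which gives both the bound 2^k escM and divergence to +infinity. *)

(* The real quadratic estimate: m beyond the larger root of
   m^2 - 2 K m - K c forces W^2 - c > 2 m whenever m^2 <= K W^2. *)
Lemma quadratic_escape (m K c W : R) :
  0 <= K -> 0 <= c -> m > K + sqrt (K * (K + c)) -> m * m <= K * (W * W) ->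
  W * W - c > 2 * m.
Proof.
  intros HK Hc Hm Hmw.
  set (s := sqrt (K * (K + c))) in Hm.
  assert (Hs : 0 <= s) by apply sqrt_pos.
  assert (Hss : s * s = K * (K + c)) by (apply sqrt_sqrt; nra).
  assert (Hroot : m * m - 2 * K * m - K * c > 0) by nra.
  assert (HKpos : K * (W * W - c - 2 * m) > 0) by nra.
  destruct (Rle_or_lt (W * W - c - 2 * m) 0) as [Hle | Hlt]; [nra | lra].
Qed.

Lemma quadratic_escape_max (mx my Kx Ky c W : R) :
  0 <= Kx -> 0 <= Ky -> 0 <= c ->
  mx * mx <= Kx * (W * W) -> my * my <= Ky * (W * W) ->
  Rmax mx my > Rmax (Kx + sqrt (Kx * (Kx + c))) (Ky + sqrt (Ky * (Ky + c))) ->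
  W * W - c > 2 * Rmax mx my.
Proof.
  intros HKx HKy Hc Hx Hy Hgt.
  pose proof (Rmax_l (Kx + sqrt (Kx * (Kx + c))) (Ky + sqrt (Ky * (Ky + c)))).
  pose proof (Rmax_r (Kx + sqrt (Kx * (Kx + c))) (Ky + sqrt (Ky * (Ky + c)))).
  revert Hgt; apply Rmax_case_strong; intros _ Hgt.
  - apply (quadratic_escape mx Kx); auto; lra.
  - apply (quadratic_escape my Ky); auto; lra.
Qed.

Lemma Cmod_sq_plus_ge (u c : C) :
  Cmod (Cplus (Cmult u u) c) >= Cmod u * Cmod u - Cmod c.
Proof.
  assert (E : Cmult u u = Cplus (Cplus (Cmult u u) c) (Copp c)).
  { destruct u, c; apply injective_projections; simpl; ring. }
  pose proof (Cmod_triangle (Cplus (Cmult u u) c) (Copp c)) as Htri.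
  rewrite <- E, Cmod_mult, Cmod_opp in Htri. lra.
Qed.

Lemma next_norm_ge (u v c : C) :
  Rmax (Cmod (Cplus (Cmult u u) c)) (Cmod (Cplus (Cmult v v) c))
  >= Rmax (Cmod u) (Cmod v) * Rmax (Cmod u) (Cmod v) - Cmod c.
Proof.
  pose proof (Cmod_sq_plus_ge u c). pose proof (Cmod_sq_plus_ge v c).
  pose proof (Rmax_l (Cmod (Cplus (Cmult u u) c)) (Cmod (Cplus (Cmult v v) c))).
  pose proof (Rmax_r (Cmod (Cplus (Cmult u u) c)) (Cmod (Cplus (Cmult v v) c))).
  apply (Rmax_case_strong (Cmod u) (Cmod v)); intros; lra.
Qed.

Lemma Rabs_Delta_le_Cmod_det (a b d f : C) :
  Rabs (Defs.Delta a b d f) <= Cmod (Cminus (Cmult a f) (Cmult b d)).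
Proof.
  unfold Defs.Delta.
  pose proof (Cmod_triangle (Cminus (Cmult a f) (Cmult b d)) (Cmult b d)) as H1.
  pose proof (Cmod_triangle (Copp (Cminus (Cmult a f) (Cmult b d))) (Cmult a f)) as H2.
  rewrite Cmod_opp in H2.
  replace (Cplus (Cminus (Cmult a f) (Cmult b d)) (Cmult b d)) with (Cmult a f) in H1
    by (destruct a, b, d, f; apply injective_projections; simpl; ring).
  replace (Cplus (Copp (Cminus (Cmult a f) (Cmult b d))) (Cmult a f)) with (Cmult b d) in H2
    by (destruct a, b, d, f; apply injective_projections; simpl; ring).
  apply Rabs_le; lra.
Qed.

Lemma Cramer_bound (det z p q u v : C) (W : R) :
  Cmult det z = Cminus (Cmult p u) (Cmult q v) ->
  Cmod u <= W -> Cmod v <= W ->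
  Cmod det * Cmod z <= (Cmod p + Cmod q) * W.
Proof.
  intros E Hu Hv. rewrite <- Cmod_mult, E.
  unfold Cminus. eapply Rle_trans; [apply Cmod_triangle|].
  rewrite Cmod_opp, !Cmod_mult.
  pose proof (Cmod_ge_0 p). pose proof (Cmod_ge_0 q). nra.
Qed.

Lemma sq_bound_of_lin (D m s W : R) :
  0 < D -> 0 <= m -> D * m <= s * W -> m * m <= (s / D) ^ 2 * (W * W).
Proof.
  intros HD Hm Hlin.
  assert (Hm' : m <= s / D * W).
  { apply (Rmult_le_reg_l D); [exact HD|].
    replace (D * (s / D * W)) with (s * W) by (field; lra). exact Hlin. }
  simpl. nra.
Qed.

Section CoupledQuadratic.

Variables a b d f c : C.
Hypothesis Hne : Cmod (Cmult a f) <> Cmod (Cmult b d).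

Lemma escM_ge_0 : 0 <= escM a b d f c.
Proof.
  unfold escM, M1. eapply Rle_trans; [|apply Rmax_l].
  pose proof (sqrt_pos (K1 a b d f * (K1 a b d f + Cmod c))).
  assert (0 <= K1 a b d f) by (unfold K1; apply pow2_ge_0). lra.
Qed.

Lemma state_bounded_by_image (x y : C) :
  let W := Rmax (Cmod (Cplus (Cmult a x) (Cmult b y)))
                (Cmod (Cplus (Cmult d x) (Cmult f y))) in
  Cmod x * Cmod x <= K1 a b d f * (W * W) /\
  Cmod y * Cmod y <= K2 a b d f * (W * W).
Proof.
  intros W.
  set (det := Cminus (Cmult a f) (Cmult b d)).
  assert (HD : 0 < Rabs (Defs.Delta a b d f)).
  { apply Rabs_pos_lt. unfold Defs.Delta. lra. }
  assert (HDdet := Rabs_Delta_le_Cmod_det a b d f). fold det in HDdet.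
  assert (Hu : Cmod (Cplus (Cmult a x) (Cmult b y)) <= W) by apply Rmax_l.
  assert (Hv : Cmod (Cplus (Cmult d x) (Cmult f y)) <= W) by apply Rmax_r.
  assert (Hx : Cmod det * Cmod x <= (Cmod f + Cmod b) * W).
  { eapply (Cramer_bound det x f b); [| exact Hu | exact Hv].
    unfold det; destruct a, b, d, f, x, y; apply injective_projections; simpl; ring. }
  assert (Hy : Cmod det * Cmod y <= (Cmod a + Cmod d) * W).
  { eapply (Cramer_bound det y a d); [| exact Hv | exact Hu].
    unfold det; destruct a, b, d, f, x, y; apply injective_projections; simpl; ring. }
  pose proof (Cmod_ge_0 x). pose proof (Cmod_ge_0 y).
  split; [unfold K1 | unfold K2]; apply sq_bound_of_lin; auto; nra.
Qed.

Lemma orbit_norm_doubles (z1 z2 : C) (n : nat) :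
  orbit_norm a b d f c z1 z2 n > escM a b d f c ->
  orbit_norm a b d f c z1 z2 (S n) > 2 * orbit_norm a b d f c z1 z2 n.
Proof.
  unfold orbit_norm; simpl.
  set (x := fst (orbit a b d f c z1 z2 n)).
  set (y := snd (orbit a b d f c z1 z2 n)).
  set (u := Cplus (Cmult a x) (Cmult b y)).
  set (v := Cplus (Cmult d x) (Cmult f y)).
  set (W := Rmax (Cmod u) (Cmod v)).
  intros Hgt.
  destruct (state_bounded_by_image x y) as [Hx Hy]. fold u v W in Hx, Hy.
  pose proof (next_norm_ge u v c) as Hnext. fold W in Hnext.
  assert (HK1 : 0 <= K1 a b d f) by (unfold K1; apply pow2_ge_0).
  assert (HK2 : 0 <= K2 a b d f) by (unfold K2; apply pow2_ge_0).
  pose proof (quadratic_escape_max (Cmod x) (Cmod y) _ _ (Cmod c) W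
                HK1 HK2 (Cmod_ge_0 c) Hx Hy Hgt).
  lra.
Qed.

Lemma orbit_norm_geometric (z1 z2 : C) (n0 : nat) :
  orbit_norm a b d f c z1 z2 n0 > escM a b d f c ->
  forall k : nat,
    orbit_norm a b d f c z1 z2 (n0 + k) >= 2 ^ k * orbit_norm a b d f c z1 z2 n0.
Proof.
  intros Hgt k. pose proof escM_ge_0.
  induction k as [|k IH].
  - rewrite Nat.add_0_r. simpl. lra.
  - assert (Habove : orbit_norm a b d f c z1 z2 (n0 + k) > escM a b d f c).
    { assert (1 <= 2 ^ k) by (apply pow_R1_Rle; lra). nra. }
    pose proof (orbit_norm_doubles z1 z2 (n0 + k) Habove).
    replace (n0 + S k)%nat with (S (n0 + k)) by lia.
    simpl. lra.
Qed.

End CoupledQuadratic.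

Lemma is_lim_seq_p_infty_of_geometric (u : nat -> R) (n0 : nat) :
  u n0 > 0 -> (forall k : nat, u (n0 + k)%nat >= 2 ^ k * u n0) ->
  is_lim_seq u p_infty.
Proof.
  intros Hpos Hgeom.
  apply (is_lim_seq_incr_n _ n0).
  apply is_lim_seq_le_p_loc with (u := fun k => u n0 * 2 ^ k).
  - exists O. intros k _. rewrite Nat.add_comm. specialize (Hgeom k). lra.
  - replace p_infty with (Rbar_mult (u n0) p_infty).
    + apply is_lim_seq_scal_l. apply is_lim_seq_geom_p. lra.
    + simpl. destruct (Rle_dec 0 (u n0)) as [H|]; [|lra].
      destruct (Rle_lt_or_eq_dec 0 (u n0) H); [reflexivity | lra].
Qed.

Theorem mainTheorem2 (a b d f c z1 z2 : C) (n0 : nat) :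
  Cmod (Cmult a f) <> Cmod (Cmult b d) ->
  orbit_norm a b d f c z1 z2 n0 > escM a b d f c ->
  is_lim_seq (fun n => orbit_norm a b d f c z1 z2 n) p_infty /\
  (forall k : nat, orbit_norm a b d f c z1 z2 (n0 + k) > 2 ^ k * escM a b d f c).
Proof.
  intros Hne Hgt.
  pose proof (escM_ge_0 a b d f c) as HM0.
  pose proof (orbit_norm_geometric a b d f c Hne z1 z2 n0 Hgt) as Hgeom.
  split.
  - apply (is_lim_seq_p_infty_of_geometric _ n0); [lra | exact Hgeom].
  - intros k. specialize (Hgeom k). pose proof (pow_lt 2 k ltac:(lra)). nra.
Qed.
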